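(* Let $\mathcal{A}$ be a complex algebra with a differential calculus $(\Omega(\mathcal{A}),d)$, and let $\mathcal{E}=\Omega^1(\mathcal{A})$, assumed to be a finitely generated projective right $\mathcal{A}$-module. Let $\wedge:\mathcal{E}\otimes_{\mathcal{A}}\mathcal{E}\to\Omega^2(\mathcal{A})$ be the map induced by the product of the calculus. Suppose the short exact sequence of right $\mathcal{A}$-modules $$0\rightarrow \ker(\wedge)\rightarrow \mathcal{E}\otimes_{\mathcal{A}}\mathcal{E}\rightarrow \mathrm{Ran}(\wedge)=\Omega^2(\mathcal{A})$$ splits. Then there exists a torsionless connection $\nabla_0$ on $\mathcal{E}$.
   Context: A differential calculus on a complex algebra $\mathcal{A}$ is a pair $(\Omega(\mathcal{A}),d)$ where $\Omega(\mathcal{A})=\oplus_{j\ge 0}\Omega^j(\mathcal{A})$, $\Omega^0(\mathcal{A})=\mathcal{A}$, each $\Omega^j(\mathcal{A})$ is an $\mathcal{A}$-$\mathcal{A}$-bimodule, there is an $\mathcal{A}$-bimodule map $\wedge:\Omega(\mathcal{A})\otimes_{\mathcal{A}}\Omega(\mathcal{A})\to\Omega(\mathcal{A})$ with $\wedge(\Omega^j\otimes_{\mathcal{A}}\Omega^k)\subseteq\Omega^{j+k}$, and maps $d:\Omega^j(\mathcal{A})\to\Omega^{j+1}(\mathcal{A})$ with $d^2=0$ and $d(\omega\wedge\eta)=d\omega\wedge\eta+(-1)^{\deg\omega}\omega\wedge d\eta$; moreover $\Omega^j(\mathcal{A})$ is the right $\mathcal{A}$-linear span of elements $da_0\wedge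 da_1\wedge\cdots\wedge da_{j-1}$. A (right) connection on $\mathcal{E}=\Omega^1(\mathcal{A})$ is a $\mathbb{C}$-linear map $\nabla:\mathcal{E}\to\mathcal{E}\otimes_{\mathcal{A}}\mathcal{E}$ with $\nabla(\omega a)=\nabla(\omega)a+\omega\otimes_{\mathcal{A}}da$ for all $\omega\in\mathcal{E}$, $a\in\mathcal{A}$. Its torsion is $T_\nabla=\wedge\circ\nabla+d:\mathcal{E}\to\Omega^2(\mathcal{A})$, and $\nabla$ is torsionless if $T_\nabla=0$. *)

From HB Require Import structures.
From mathcomp Require Import all_boot all_order all_algebra.
From mathcomp Require Import reals complex.
Set Implicit Arguments.
Unset Strict Implicit.
Unset Printing Implicit Defensive.
Import Order.TTheory GRing.Theory Num.Theory.
Local Open Scope ring_scope.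

Record is_bimodule (R : realType) (A : algType R[i]) (M : lmodType R[i])
    (l : A -> M -> M) (r : M -> A -> M) : Prop := {
  bm_laddr : forall a m n, l a (m + n) = l a m + l a n;
  bm_laddl : forall a b m, l (a + b) m = l a m + l b m;
  bm_lscale : forall (c : R[i]) a m, l (c *: a) m = c *: l a m;
  bm_lscaler : forall (c : R[i]) a m, l a (c *: m) = c *: l a m;
  bm_lmul : forall a b m, l (a * b) m = l a (l b m);
  bm_l1 : forall m, l 1 m = m;
  bm_raddl : forall m n a, r (m + n) a = r m a + r n a;
  bm_raddr : forall m a b, r m (a + b) = r m a + r m b;
  bm_rscale : forall (c : R[i]) m a, r m (c *: a) = c *: r m a;
  bm_rscalel : forall (c : R[i]) m a, r (c *: m) a = c *: r m a;
  bm_rmul : forall m a b, r m (a * b) = r (r m a) b;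
  bm_r1 : forall m, r m 1 = m;
  bm_lr : forall a m b, l a (r m b) = r (l a m) b
}.

Record is_tensor_product (R : realType) (A : algType R[i])
    (M N T : lmodType R[i])
    (lM : A -> M -> M) (rM : M -> A -> M)
    (lN : A -> N -> N) (rN : N -> A -> N)
    (lT : A -> T -> T) (rT : T -> A -> T) (t : M -> N -> T) : Prop := {
  tp_addl : forall m m' n, t (m + m') n = t m n + t m' n;
  tp_addr : forall m n n', t m (n + n') = t m n + t m n';
  tp_balanced : forall m a n, t (rM m a) n = t m (lN a n);
  tp_lact : forall a m n, lT a (t m n) = t (lM a m) n;
  tp_ract : forall m n a, rT (t m n) a = t m (rN n a);
  tp_univ_ex : forall (Z : zmodType) (f : M -> N -> Z),
      (forall m m' n, f (m + m') n = f m n + f m' n) ->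
      (forall m n n', f m (n + n') = f m n + f m n') ->
      (forall m a n, f (rM m a) n = f m (lN a n)) ->
      exists g : T -> Z, (forall x y, g (x + y) = g x + g y) /\
                         (forall m n, g (t m n) = f m n);
  tp_univ_uniq : forall (Z : zmodType) (g g' : T -> Z),
      (forall x y, g (x + y) = g x + g y) ->
      (forall x y, g' (x + y) = g' x + g' y) ->
      (forall m n, g (t m n) = g' (t m n)) ->
      forall x, g x = g' x
}.

(* A differential calculus on A, truncated at degree 2:
   Omega^0 = A, Omega^1 = E, Omega^2 = O2, T = E (x)_A E with pure tensor t,
   wedge : E (x)_A E -> O2 the bimodule map induced by the product
   (the products Omega^0 x Omega^j and Omega^j x Omega^0 are the bimodule
   actions), d0 : A -> E, d1 : E -> O2. *)
Record is_calculus2 (R : realType) (A : algType R[i])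
    (E T O2 : lmodType R[i])
    (lE : A -> E -> E) (rE : E -> A -> E)
    (lT : A -> T -> T) (rT : T -> A -> T)
    (lO : A -> O2 -> O2) (rO : O2 -> A -> O2)
    (t : E -> E -> T) (wedge : T -> O2) (d0 : A -> E) (d1 : E -> O2) : Prop := {
  cal_wedge_add : forall x y, wedge (x + y) = wedge x + wedge y;
  cal_wedge_l : forall a x, wedge (lT a x) = lO a (wedge x);
  cal_wedge_r : forall x a, wedge (rT x a) = rO (wedge x) a;
  cal_d0_add : forall a b, d0 (a + b) = d0 a + d0 b;
  cal_d0_scale : forall (c : R[i]) a, d0 (c *: a) = c *: d0 a;
  cal_d1_add : forall w w', d1 (w + w') = d1 w + d1 w';
  cal_d1_scale : forall (c : R[i]) w, d1 (c *: w) = c *: d1 w;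
  cal_dd : forall a, d1 (d0 a) = 0;
  cal_leibniz0 : forall a b, d0 (a * b) = rE (d0 a) b + lE a (d0 b);
  cal_leibniz1r : forall w a, d1 (rE w a) = rO (d1 w) a - wedge (t w (d0 a));
  cal_leibniz1l : forall a w, d1 (lE a w) = wedge (t (d0 a) w) + lO a (d1 w);
  cal_gen1 : forall w : E, exists s : seq (A * A),
      w = \sum_(p <- s) rE (d0 p.1) p.2;
  cal_gen2 : forall x : O2, exists s : seq (A * A * A),
      x = \sum_(p <- s) rO (wedge (t (d0 p.1.1) (d0 p.1.2))) p.2
}.

(* E is a finitely generated projective right A-module: a direct summand of
   the free right module A^n (viewed as functions 'I_n -> A), i.e. there are
   right A-linear iota : E -> A^n and pi : A^n -> E with pi \o iota = id. *)
Definition fg_projective_right (R : realType) (A : algType R[i])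
    (E : lmodType R[i]) (rE : E -> A -> E) : Prop :=
  exists (n : nat) (iota : E -> 'I_n -> A) (pi : ('I_n -> A) -> E),
    [/\ forall w w' i, iota (w + w') i = iota w i + iota w' i,
        forall w a i, iota (rE w a) i = iota w i * a,
        forall f g, pi (fun i => f i + g i) = pi f + pi g,
        forall f a, pi (fun i => f i * a) = rE (pi f) a
      & forall w, pi (iota w) = w].

Definition wedge_splits (R : realType) (A : algType R[i])
    (T O2 : lmodType R[i]) (rT : T -> A -> T) (rO : O2 -> A -> O2)
    (wedge : T -> O2) : Prop :=
  exists sigma : O2 -> T,
    [/\ forall x y, sigma (x + y) = sigma x + sigma y,
        forall x a, sigma (rO x a) = rT (sigma x) a
      & forall x, wedge (sigma x) = x].

Definition is_connection (R : realType) (A : algType R[i])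
    (E T : lmodType R[i]) (rE : E -> A -> E) (rT : T -> A -> T)
    (t : E -> E -> T) (d0 : A -> E) (nabla : E -> T) : Prop :=
  [/\ forall w w', nabla (w + w') = nabla w + nabla w',
      forall (c : R[i]) w, nabla (c *: w) = c *: nabla w
    & forall w a, nabla (rE w a) = rT (nabla w) a + t w (d0 a)].

Definition torsionless (R : realType) (E T O2 : lmodType R[i])
    (wedge : T -> O2) (d1 : E -> O2) (nabla : E -> T) : Prop :=
  forall w, wedge (nabla w) + d1 w = 0.

(* A projective module carries the Grassmann connection
   w |-> sum_i e_i (x) d(w_i), where w = sum_i e_i w_i in the generators e_i
   of E coming from E being a summand of A^n.  The torsion of any connection
   is right A-linear, because the inhomogeneous terms of the two Leibniz rules
   (for nabla and for d) cancel under wedge.  Composing it with the right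
   A-linear splitting sigma of wedge therefore gives a tensorial correction:
   nabla - sigma o T_nabla is still a connection, and its torsion is
   T_nabla - wedge (sigma T_nabla) = 0. *)
From HB Require Import structures.
From mathcomp Require Import all_boot all_order all_algebra.
From mathcomp Require Import reals complex.
From Stdlib Require Import FunctionalExtensionality.
Set Implicit Arguments.
Unset Strict Implicit.
Unset Printing Implicit Defensive.
Import GRing.Theory.
Local Open Scope ring_scope.

Section AdditiveMaps.
Variables (U V : zmodType) (f : U -> V).
Hypothesis f_add : forall x y, f (x + y) = f x + f y.

Lemma additive_0 : f 0 = 0.
Proof. by apply: (@addrI _ (f 0)); rewrite -f_add !addr0. Qed.

Lemma additive_B x y : f (x - y) = f x - f y.
Proof.
rewrite f_add; congr (_ + _); apply: (@addrI _ (f y)).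
by rewrite -f_add !subrr additive_0.
Qed.

Lemma additive_sum (I : Type) (s : seq I) (F : I -> U) :
  f (\sum_(i <- s) F i) = \sum_(i <- s) f (F i).
Proof.
elim: s => [|x s IH]; first by rewrite !big_nil additive_0.
by rewrite !big_cons f_add IH.
Qed.

End AdditiveMaps.

Section Connections.
Variables (R : realType) (A : algType R[i]) (E T O2 : lmodType R[i]).
Variables (lE : A -> E -> E) (rE : E -> A -> E).
Variables (lT : A -> T -> T) (rT : T -> A -> T).
Variables (lO : A -> O2 -> O2) (rO : O2 -> A -> O2).
Variables (t : E -> E -> T) (wedge : T -> O2) (d0 : A -> E) (d1 : E -> O2).
Hypothesis bmE : is_bimodule lE rE.
Hypothesis bmT : is_bimodule lT rT.
Hypothesis bmO : is_bimodule lO rO.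
Hypothesis tp : is_tensor_product lE rE lE rE lT rT t.
Hypothesis cal : is_calculus2 lE rE lT rT lO rO t wedge d0 d1.

Lemma scaleE_ract (c : R[i]) w : c *: w = rE w (c *: 1).
Proof. by rewrite (bm_rscale bmE) (bm_r1 bmE). Qed.

Lemma scaleT_ract (c : R[i]) x : c *: x = rT x (c *: 1).
Proof. by rewrite (bm_rscale bmT) (bm_r1 bmT). Qed.

Definition torsion (nabla : E -> T) (w : E) : O2 := wedge (nabla w) + d1 w.

Section Torsion.
Variable nabla : E -> T.
Hypothesis nabla_conn : is_connection rE rT t d0 nabla.

Lemma torsion_add w w' : torsion nabla (w + w') = torsion nabla w + torsion nabla w'.
Proof.
have [nabla_add _ _] := nabla_conn.
by rewrite /torsion nabla_add (cal_wedge_add cal) (cal_d1_add cal) addrACA.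
Qed.

Lemma torsion_ract w a : torsion nabla (rE w a) = rO (torsion nabla w) a.
Proof.
have [_ _ nabla_leibniz] := nabla_conn.
rewrite /torsion nabla_leibniz (cal_wedge_add cal) (cal_wedge_r cal).
by rewrite (cal_leibniz1r cal) (bm_raddl bmO) addrACA subrr addr0.
Qed.

Lemma torsion_correction_connection (sigma : O2 -> T) :
    (forall x y, sigma (x + y) = sigma x + sigma y) ->
    (forall x a, sigma (rO x a) = rT (sigma x) a) ->
  is_connection rE rT t d0 (fun w => nabla w - sigma (torsion nabla w)).
Proof.
move=> sigma_add sigma_ract; have [nabla_add nabla_scale nabla_leibniz] := nabla_conn.
split=> [w w' | c w | w a].
- by rewrite nabla_add torsion_add sigma_add opprD addrACA.
- rewrite nabla_scale (scaleE_ract c w) torsion_ract sigma_ract.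
  by rewrite -scaleT_ract scalerBr.
- rewrite nabla_leibniz torsion_ract sigma_ract.
  rewrite (additive_B (fun x y => bm_raddl bmT x y a)).
  by rewrite addrAC.
Qed.

Lemma torsion_correction_torsionless (sigma : O2 -> T) :
    (forall x, wedge (sigma x) = x) ->
  torsionless wedge d1 (fun w => nabla w - sigma (torsion nabla w)).
Proof.
move=> sigmaK w; rewrite (additive_B (cal_wedge_add cal)) sigmaK /torsion.
by rewrite opprD addrA subrr add0r addNr.
Qed.

End Torsion.

Section Grassmann.
Variables (n : nat) (iota : E -> 'I_n -> A) (pi : ('I_n -> A) -> E).
Hypothesis iota_add : forall w w' i, iota (w + w') i = iota w i + iota w' i.
Hypothesis iota_ract : forall w a i, iota (rE w a) i = iota w i * a.
Hypothesis pi_add : forall f g, pi (fun i => f i + g i) = pi f + pi g.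
Hypothesis pi_ract : forall f a, pi (fun i => f i * a) = rE (pi f) a.
Hypothesis iotaK : forall w, pi (iota w) = w.

Definition generator (i : 'I_n) : E := pi (fun j => (j == i)%:R).

Lemma pi_sum (g : 'I_n -> 'I_n -> A) (s : seq 'I_n) :
  pi (fun j => \sum_(i <- s) g i j) = \sum_(i <- s) pi (g i).
Proof.
have pi_const_add : forall a b : A, pi (fun=> a + b) = pi (fun=> a) + pi (fun=> b).
  by move=> a b; rewrite -pi_add.
elim: s => [|x s IH].
  under [fun j => _]functional_extensionality => j do rewrite big_nil.
  by rewrite big_nil (additive_0 pi_const_add).
rewrite big_cons -IH -pi_add; congr pi; apply: functional_extensionality => j.
by rewrite big_cons.
Qed.

Lemma generator_decomposition w : \sum_(i < n) rE (generator i) (iota w i) = w.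
Proof.
rewrite -{2}(iotaK w).
under eq_bigr => i _ do rewrite -pi_ract.
rewrite -pi_sum; congr pi; apply: functional_extensionality => j.
rewrite (bigD1 j) //= eqxx mul1r big1 ?addr0 // => i /negPf neq_ij.
by rewrite eq_sym neq_ij mul0r.
Qed.

Definition grassmann (w : E) : T := \sum_(i < n) t (generator i) (d0 (iota w i)).

Lemma grassmann_connection : is_connection rE rT t d0 grassmann.
Proof.
split=> [w w' | c w | w a]; rewrite /grassmann.
- rewrite -big_split /=; apply: eq_bigr => i _.
  by rewrite iota_add (cal_d0_add cal) (tp_addr tp).
- rewrite scaler_sumr; apply: eq_bigr => i _.
  rewrite scaleE_ract iota_ract mulr_algr (cal_d0_scale cal) scaleE_ract.
  by rewrite -(tp_ract tp) -scaleT_ract.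
- rewrite (additive_sum (fun x y => bm_raddl bmT x y a)).
  rewrite -{3}(generator_decomposition w).
  rewrite (additive_sum (fun x y => tp_addl tp x y (d0 a))) -big_split /=.
  apply: eq_bigr => i _.
  by rewrite iota_ract (cal_leibniz0 cal) (tp_addr tp) (tp_ract tp) (tp_balanced tp).
Qed.

End Grassmann.

Lemma projective_connection_exists :
  fg_projective_right rE -> exists nabla, is_connection rE rT t d0 nabla.
Proof.
move=> [n [iota [pi [iota_add iota_ract pi_add pi_ract iotaK]]]].
by exists (grassmann iota pi); apply: grassmann_connection.
Qed.

End Connections.

Theorem theorem3p3 (R : realType) (A : algType R[i]) (E T O2 : lmodType R[i])
    (lE : A -> E -> E) (rE : E -> A -> E)
    (lT : A -> T -> T) (rT : T -> A -> T)
    (lO : A -> O2 -> O2) (rO : O2 -> A -> O2)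
    (t : E -> E -> T) (wedge : T -> O2) (d0 : A -> E) (d1 : E -> O2) :
  is_bimodule lE rE ->
  is_bimodule lT rT ->
  is_bimodule lO rO ->
  is_tensor_product lE rE lE rE lT rT t ->
  is_calculus2 lE rE lT rT lO rO t wedge d0 d1 ->
  fg_projective_right rE ->
  wedge_splits rT rO wedge ->
  exists nabla0 : E -> T,
    is_connection rE rT t d0 nabla0 /\ torsionless wedge d1 nabla0.
Proof.
move=> bmE bmT bmO tp cal proj [sigma [sigma_add sigma_ract sigmaK]].
have [nabla nabla_conn] := projective_connection_exists bmE bmT tp cal proj.
exists (fun w => nabla w - sigma (torsion wedge d1 nabla w)); split.
- exact: (torsion_correction_connection bmE bmT bmO cal nabla_conn sigma_add sigma_ract).
- exact: (torsion_correction_torsionless cal nabla sigmaK).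
Qed.
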